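(* Consider the setting and algorithm described in the context, with a starting point satisfying $x^0\in\mathcal{S}$. Then there exist two positive scalars $m$ and $M$ such that $m<f(Kx^k)\le M$ for all $k\ge0$.
   Context: Setting: $\mathcal{S}\subseteq\mathbb{R}^n$ is nonempty, convex and compact; $A:\mathbb{R}^n\to\mathbb{R}^s$, $K:\mathbb{R}^n\to\mathbb{R}^p$ linear; $g:\mathbb{R}^s\to\mathbb{R}\cup\{+\infty\}$ proper, convex, lsc; $h:\mathbb{R}^n\to\mathbb{R}$ differentiable on an open set containing $\mathcal{S}$ with $L_{\nabla h}$-Lipschitz gradient there; $f:\mathbb{R}^p\to\mathbb{R}\cup\{+\infty\}$ proper, convex, lsc with $K(\mathcal{S})\subseteq\operatorname{int}(\operatorname{dom}f)$ and $f(Kx)>0$ for all $x\in\mathcal{S}$; $\mathcal{S}\cap A^{-1}(\operatorname{dom}g)\ne\emptyset$ and $\inf_{x\in\mathcal{S}}\{g(Ax)+h(x)\}>0$. Notation: $g^*$ Fenchel conjugate, $\iota_{\mathcal{S}}$ indicator of $\mathcal{S}$, $\operatorname{Proj}_{\mathcal{S}}$ Euclidean projection, $\operatorname{prox}_{\varphi,\kappa}(x)=\arg\min_y\{\varphi(y)+\frac1{2\kappa}\|y-x\|^2\}$, $\Psi(x,z,u,\delta,\gamma):=\langle z,Ax\rangle-g^*(z)+h(x)+\iota_{\mathcal{S}}(x)+\frac{\delta}{2}\|x-u\|^2-\frac{\gamma}{2}\|z\|^2$. Algorithm: given $0<\beta<2$, $\nu>0$, $0<q<1$, $\delta_0,\theta_0>0$,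 $\gamma_0=1$, $\varepsilon>0$ and $(x^0,z^0,u^0)$, for $k\ge0$: choose $y^{k+1}\in\partial f(Kx^k)$; $x^{k+1}:=\operatorname{Proj}_{\mathcal{S}}(u^k+\frac{\theta_k}{\delta_k}K^*y^{k+1}-\frac1{\delta_k}\nabla h(x^k)-\frac1{\delta_k}A^*z^k)$; $u^{k+1}:=(1-\beta)u^k+\beta x^{k+1}$; take the smallest $j_k\ge0$ such that with $\gamma_{k,j_k}:=\gamma_kq^{j_k}$, $z^{k+1,j_k}:=\operatorname{prox}_{g^*,1/\gamma_{k,j_k}}(Ax^{k+1}/\gamma_{k,j_k})$ one has $\theta_{k+1}:=\Psi(x^{k+1},z^{k+1,j_k},u^{k+1},\delta_k,\gamma_{k,j_k})/f(Kx^{k+1})>0$; set $\gamma_{k+1}:=\gamma_{k,j_k}$, $\delta_{k+1}:=2\nu+L_{\nabla h}+2\|A\|^2/\gamma_{k+1}$, $z^{k+1}:=z^{k+1,j_k}$; if $\|z^{k+1}\|>\min(\varepsilon/\gamma_{k+1},\sqrt{2\varepsilon/\gamma_{k+1}})$, replace $\gamma_{k+1}$ by $\gamma_{k+1}q$ and recompute $\delta_{k+1}$ by the same formula. *)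

(* Vectors of R^n are column vectors
   'cV[R]_n, linear maps are matrices, adjoints are transposes. *)
From HB Require Import structures.
From mathcomp Require Import all_boot all_order all_algebra.
From mathcomp Require Import all_classical all_reals all_analysis.
Set Implicit Arguments. Unset Strict Implicit. Unset Printing Implicit Defensive.
Import Order.TTheory GRing.Theory Num.Theory.
Import numFieldNormedType.Exports.
Local Open Scope classical_set_scope.
Local Open Scope ring_scope.

Section Defs.
Variable R : realType.

Definition dotv (n : nat) (u v : 'cV[R]_n) : R := \sum_(i < n) u i 0 * v i 0.
Definition enorm (n : nat) (v : 'cV[R]_n) : R := Num.sqrt (dotv v v).

Definition opnorm (m n : nat) (A : 'M[R]_(m, n)) : R :=
  sup [set enorm (A *m x) | x in [set x : 'cV[R]_n | enorm x <= 1]].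

Definition grad (n : nat) (h : 'cV[R]_n -> R) (x : 'cV[R]_n) : 'cV[R]_n :=
  \col_(i < n) ('d h x (delta_mx i 0 : 'cV[R]_n)).

Local Open Scope ereal_scope.

Definition edom (n : nat) (f : 'cV[R]_n -> \bar R) : set 'cV[R]_n :=
  [set x | f x < +oo].

Definition eproper (n : nat) (f : 'cV[R]_n -> \bar R) : Prop :=
  (exists x, f x < +oo) /\ (forall x, -oo < f x).

Definition econvex (n : nat) (f : 'cV[R]_n -> \bar R) : Prop :=
  forall (x y : 'cV[R]_n) (t : R), (0 <= t <= 1)%R -> f x < +oo -> f y < +oo ->
    f (t *: x + (1 - t) *: y)%R <= t%:E * f x + (1 - t)%:E * f y.

Definition fconj (n : nat) (g : 'cV[R]_n -> \bar R) (z : 'cV[R]_n) : \bar R :=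
  ereal_sup [set (dotv z w)%:E - g w | w in [set: 'cV[R]_n]].

Definition indic (n : nat) (S : set 'cV[R]_n) (x : 'cV[R]_n) : \bar R :=
  if `[< S x >] then 0 else +oo.

Definition is_subgrad (n : nat) (f : 'cV[R]_n -> \bar R) (w y : 'cV[R]_n) : Prop :=
  forall v, f w + (dotv y (v - w)%R)%:E <= f v.

Definition is_proj (n : nat) (S : set 'cV[R]_n) (v p : 'cV[R]_n) : Prop :=
  S p /\ forall y, S y -> (enorm (p - v) <= enorm (y - v))%R.

Definition is_prox (n : nat) (phi : 'cV[R]_n -> \bar R) (kappa : R)
    (x p : 'cV[R]_n) : Prop :=
  forall y, phi p + ((2 * kappa)^-1 * enorm (p - x) ^+ 2)%:E
            <= phi y + ((2 * kappa)^-1 * enorm (y - x) ^+ 2)%:E.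

Definition Psi (n s : nat) (A : 'M[R]_(s, n)) (g : 'cV[R]_s -> \bar R)
    (h : 'cV[R]_n -> R) (S : set 'cV[R]_n)
    (x : 'cV[R]_n) (z : 'cV[R]_s) (u : 'cV[R]_n) (delta gamma : R) : \bar R :=
  (dotv z (A *m x))%:E - fconj g z + (h x)%:E + indic S x
  + (delta / 2 * enorm (x - u) ^+ 2)%:E - (gamma / 2 * enorm z ^+ 2)%:E.

End Defs.

From HB Require Import structures.
From mathcomp Require Import all_boot all_order all_algebra.
From mathcomp Require Import all_classical all_reals all_analysis.
From mathcomp Require Import lra.
Set Implicit Arguments. Unset Strict Implicit. Unset Printing Implicit Defensive.
Import Order.TTheory GRing.Theory Num.Theory.
Import numFieldNormedType.Exports.
Local Open Scope classical_set_scope.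
Local Open Scope ring_scope.

(* Every iterate lies in S (x^0 by assumption, the others as projections onto
   S), so it suffices to bound f (K x) uniformly on the compact set S.
   Above: a proper convex function is bounded above near every interior point w
   of its domain, since by convexity its maximum over the vertices w +- d e_i of
   a small cross-polytope bounds it on the whole cross-polytope, which contains
   a ball around w; and K(S) lies in the interior of dom f.
   Below: f o K is lower semicontinuous and positive on S, hence locally above a
   positive constant.  Compactness turns both local bounds into uniform ones. *)

Section matrix_norm.
Variable R : realFieldType.

Lemma mx_norm_entry_le m n (M : 'M[R]_(m, n)) i j : `|M i j| <= `|M|.
Proof.
rewrite [leRHS]/Num.Def.normr /= mx_normrE.
exact: (le_bigmax _ (fun ij : 'I_m * 'I_n => `|M ij.1 ij.2|) (i, j)).
Qed.

Lemma mx_norm_delta_le1 m n (i : 'I_m) (j : 'I_n) :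
  `|delta_mx i j : 'M[R]_(m, n)| <= 1.
Proof.
rewrite [leLHS]/Num.Def.normr /= mx_normrE.
apply: bigmax_le => // -[a b] _; rewrite mxE.
by case: (_ && _); rewrite ?normr1 ?normr0.
Qed.

Lemma mx_norm_mulmx_le m n r (K : 'M[R]_(m, n)) (y : 'M[R]_(n, r)) :
  `|K *m y| <= n%:R * `|K| * `|y|.
Proof.
rewrite [leLHS]/Num.Def.normr /= mx_normrE.
apply: bigmax_le => [|[i j] _ /=]; first by rewrite !mulr_ge0.
rewrite mxE; apply: le_trans (ler_norm_sum _ _ _) _.
apply: (@le_trans _ _ (\sum_(l < n) `|K| * `|y|)).
  by apply: ler_sum => l _; rewrite normrM ler_pM ?mx_norm_entry_le.
by rewrite sumr_const card_ord -mulrA mulr_natl.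
Qed.

Lemma mulmx_continuous m n r (K : 'M[R]_(m, n)) :
  continuous (mulmx K : 'M[R]_(n, r) -> 'M[R]_(m, r)).
Proof.
move=> y0 V /nbhs_ballP [e e0 eV]; apply/nbhs_ballP.
have C0 : 0 < n%:R * `|K| + 1 by rewrite ltr_wpDl // mulr_ge0.
exists (e / (n%:R * `|K| + 1)); first by rewrite /= divr_gt0.
move=> y; rewrite -!ball_normE /= => hy; apply: eV; rewrite /= -ball_normE /=.
rewrite -mulmxBr; apply: le_lt_trans (mx_norm_mulmx_le K (y0 - y)) _.
apply: (@le_lt_trans _ _ ((n%:R * `|K| + 1) * `|y0 - y|)).
  by rewrite ler_wpM2r // lerDl.
by rewrite mulrC -ltr_pdivlMr.
Qed.

End matrix_norm.

Section l1_norm.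
Variables (R : realFieldType) (p : nat).
Implicit Types v : 'cV[R]_p.

Lemma drop_coord_entry v (k i : 'I_p) :
  (v - v k 0 *: delta_mx k 0) i 0 = if i == k then 0 else v i 0.
Proof.
rewrite !mxE eqxx andbT.
by case: eqP => [->|_]; rewrite ?mulr1 ?subrr ?mulr0 ?subr0.
Qed.

Lemma l1_norm_drop_coord v (k : 'I_p) :
  \sum_i `|v i 0| = `|v k 0| + \sum_i `|(v - v k 0 *: delta_mx k 0) i 0|.
Proof.
rewrite (bigD1 k) //= [X in _ = _ + X](bigD1 k) //= drop_coord_entry eqxx normr0 add0r.
by congr (_ + _); apply: eq_bigr => i /negbTE ik; rewrite drop_coord_entry ik.
Qed.

Lemma l1_norm_le_mx_norm v : \sum_i `|v i 0| <= p%:R * `|v|.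
Proof.
apply: le_trans (_ : \sum_(i < p) `|v| <= _).
  by apply: ler_sum => i _; exact: mx_norm_entry_le.
by rewrite sumr_const card_ord mulr_natl.
Qed.

End l1_norm.

Lemma add_as_convex_comb (R : fieldType) (V : lmodType R) (w u e : V) (t b c : R) :
  t != 0 -> (1 - t) * c = b ->
  w + (u + b *: e) = t *: (w + t^-1 *: u) + (1 - t) *: (w + c *: e).
Proof.
move=> t0 <-; rewrite !scalerDr !scalerA mulfV // scale1r.
by rewrite addrACA -scalerDl subrKC scale1r.
Qed.

Lemma signed_scale_norm (R : realFieldType) (b d : R) : 0 < d ->
  exists2 c : R, `|c| = d & `|b| / d * c = b.
Proof.
move=> d_gt0; have [b_lt0|b_ge0] := ltrP b 0.
  exists (- d); first by rewrite normrN gtr0_norm.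
  by rewrite ltr0_norm // mulrN divfK ?gt_eqF ?opprK.
exists d; first by rewrite gtr0_norm.
by rewrite ger0_norm // divfK ?gt_eqF.
Qed.

Section cross_polytope.
Variables (R : realFieldType) (p : nat) (C : set 'cV[R]_p) (w : 'cV[R]_p) (d : R).
Hypotheses (d_gt0 : 0 < d) (Cw : C w)
  (C_convex : forall a b (t : R), 0 <= t <= 1 -> C a -> C b -> C (t *: a + (1 - t) *: b))
  (C_vertex : forall (i : 'I_p) (c : R), `|c| = d -> C (w + c *: delta_mx i 0)).

(* w + v is a convex combination of the vertex w + c e_k and of w + v'/t, where
   v' (v with its k-th coordinate dropped) is supported on the first k ones. *)
Lemma cross_polytope_sub_supp k (v : 'cV[R]_p) : \sum_i `|v i 0| < d ->
  (forall i : 'I_p, (k <= i)%N -> v i 0 = 0) -> C (w + v).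
Proof.
elim: k v => [|k IH] v vd vsupp.
  suff -> : v = 0 by rewrite addr0.
  by apply/matrixP => i j; rewrite (ord1 j) mxE vsupp.
have [kp|pk] := ltnP k p; last first.
  by apply: IH vd _ => i ki; have := ltn_ord i; rewrite ltnNge (leq_trans pk ki).
pose ik : 'I_p := Ordinal kp; pose e : 'cV[R]_p := delta_mx ik 0.
pose v' := v - v ik 0 *: e; pose t := 1 - `|v ik 0| / d.
have v'_sum : `|v ik 0| + \sum_i `|v' i 0| < d by rewrite -l1_norm_drop_coord.
have v'_sum_ge0 : 0 <= \sum_i `|v' i 0| by apply: sumr_ge0.
have vk_ge0 : 0 <= `|v ik 0| / d by rewrite divr_ge0 ?normr_ge0 ?ltW.
have vk_lt1 : `|v ik 0| / d < 1 by rewrite ltr_pdivrMr // mul1r; lra.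
have t_gt0 : 0 < t by rewrite /t; lra.
have [c c_norm c_scale] := signed_scale_norm (v ik 0) d_gt0.
have tc : (1 - t) * c = v ik 0 by rewrite /t subKr.
rewrite -(subrK (v ik 0 *: e) v) (add_as_convex_comb _ _ _ (lt0r_neq0 t_gt0) tc).
apply: C_convex; [by rewrite ltW //= /t; lra | apply: IH | exact: C_vertex].
  rewrite (eq_bigr (fun i => t^-1 * `|v' i 0|)); last first.
    by move=> i _; rewrite mxE normrM gtr0_norm // invr_gt0.
  rewrite -mulr_sumr ltr_pdivrMl // /t mulrBl mul1r divfK ?gt_eqF //; lra.
move=> i ki; rewrite mxE drop_coord_entry; case: eqP => [_|iNk]; first by rewrite mulr0.
rewrite vsupp ?mulr0 // ltn_neqAle ki andbT.
by apply/eqP => ik_eq; apply: iNk; apply: val_inj.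
Qed.

Lemma cross_polytope_sub (v : 'cV[R]_p) : \sum_i `|v i 0| < d -> C (w + v).
Proof. by move=> vd; apply: (@cross_polytope_sub_supp p) => // i; rewrite leqNgt ltn_ord. Qed.

End cross_polytope.

Section compact_bounds.
Context {X : topologicalType} {R : realFieldType}.

Lemma compact_sub_near (I : Type) (F : set_system I) (P : I -> set X) (S : set X) :
  Filter F -> compact S ->
  (forall x, S x -> exists2 U, nbhs x U & \forall i \near F, U `<=` P i) ->
  \forall i \near F, S `<=` P i.
Proof.
move=> FF /compact_near_coveringP cov loc; apply: cov => x /loc [U xU FU].
by exists (U, [set i | U `<=` P i]) => // -[y i] [Uy UP]; exact: UP.
Qed.

Lemma lower_semicontinuous_comp (Y : topologicalType) (f : Y -> \bar R) (g : X -> Y) :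
  continuous g -> lower_semicontinuous f -> lower_semicontinuous (f \o g).
Proof.
move=> gC flsc x a /flsc [V gxV fV].
by exists (g @^-1` V) => [|y /fV //]; exact: gC.
Qed.

Lemma compact_bounded_above (S : set X) (f : X -> \bar R) :
  compact S -> (forall x, S x -> exists c : R, \forall y \near x, (f y <= c%:E)%E) ->
  exists2 M : R, 0 < M & forall x, S x -> (f x <= M%:E)%E.
Proof.
move=> Scomp loc.
have : \forall M \near +oo, S `<=` [set x | (f x <= M%:E)%E].
  apply: compact_sub_near => // x /loc [c fc].
  exists [set y | (f y <= c%:E)%E] => //; near=> M => y /= fy.
  by apply: le_trans fy _; rewrite lee_fin; near: M; apply: nbhs_pinfty_ge; rewrite num_real.
by move=> /(filterI (nbhs_pinfty_gt (num_real (0 : R)))) /filter_ex [M [M0 SM]];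
  exists M.
Unshelve. all: end_near. Qed.

Lemma compact_lsc_bounded_below_pos (S : set X) (f : X -> \bar R) :
  compact S -> lower_semicontinuous f -> (forall x, S x -> (0 < f x)%E) ->
  exists2 m : R, 0 < m & forall x, S x -> (m%:E < f x)%E.
Proof.
move=> Scomp flsc fpos.
have : \forall m \near 0^'+, S `<=` [set x | (m%:E < f x)%E].
  apply: compact_sub_near => // x Sx.
  have [a a0 afx] : exists2 a : R, 0 < a & (a%:E < f x)%E.
    move: (fpos x Sx); case: (f x) => [r r0| _ |//].
      by rewrite lte_fin in r0; exists (r / 2); rewrite ?lte_fin; lra.
    by exists 1; rewrite ?ltry.
  have [V xV fV] := flsc x a afx.
  exists V => //; near=> m => y /fV /=; apply: le_lt_trans; rewrite lee_fin.
  by near: m; exact: nbhs_right_le.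
by move=> /(filterI (nbhs_right_gt (0 : R))) /filter_ex [m [m0 Sm]]; exists m.
Unshelve. all: end_near. Qed.

End compact_bounds.

Section econvex_bounded_above.
Variables (R : realType) (p : nat) (f : 'cV[R]_p -> \bar R).
Hypotheses (f_proper : eproper f) (f_convex : econvex f).

Lemma econvex_sublevel (M : R) (a b : 'cV[R]_p) (t : R) : 0 <= t <= 1 ->
  (f a <= M%:E)%E -> (f b <= M%:E)%E -> (f (t *: a + (1 - t) *: b) <= M%:E)%E.
Proof.
move=> t01 faM fbM.
have fa_fin : (f a < +oo)%E by apply: le_lt_trans faM (ltry M).
have fb_fin : (f b < +oo)%E by apply: le_lt_trans fbM (ltry M).
apply: le_trans (f_convex t01 fa_fin fb_fin) _.
move: (f_proper.2 a) (f_proper.2 b) faM fbM.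
case: (f a) => [ra||] //; case: (f b) => [rb||] // _ _.
rewrite -!EFinM -EFinD !lee_fin; move: t01 => /andP[t0 t1] raM rbM; nra.
Qed.

Lemma econvex_bounded_above_near (w : 'cV[R]_p) :
  interior (edom f) w -> exists c : R, \forall v \near w, (f v <= c%:E)%E.
Proof.
move=> /nbhs_ballP [r /= r_gt0 ball_dom].
have fin v : edom f v -> f v = (fine (f v))%:E.
  by move=> fv; rewrite fineK // fin_real // f_proper.2 fv.
pose d := r / 2; have d_gt0 : 0 < d by rewrite divr_gt0.
have vertex_dom (i : 'I_p) (c : R) : `|c| = d -> edom f (w + c *: delta_mx i 0).
  move=> c_norm; apply: ball_dom; rewrite -ball_normE /= opprD addrA subrr add0r.
  rewrite normrN normrZ c_norm; apply: (@le_lt_trans _ _ d); last by rewrite /d; lra.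
  by rewrite ler_piMr ?(ltW d_gt0) ?mx_norm_delta_le1.
pose M := \big[Num.max/fine (f w)]_(i < p)
  Num.max (fine (f (w + d *: delta_mx i 0))) (fine (f (w + (- d) *: delta_mx i 0))).
pose C := [set v | (f v <= M%:E)%E].
have Cw : C w.
  by rewrite /C /= (fin w (ball_dom _ (ballxx _ r_gt0))) lee_fin; apply/bigmax_geP; left.
have C_vertex (i : 'I_p) (c : R) : `|c| = d -> C (w + c *: delta_mx i 0).
  move=> c_norm; rewrite /C /= (fin _ (vertex_dom i c c_norm)) lee_fin.
  apply/bigmax_geP; right; exists i => //.
  have [->|->] : c = d \/ c = - d.
    by move: c_norm; case: (ger0P c) => _ <-; [left | right; rewrite opprK].
  by rewrite le_max lexx.
  by rewrite le_max lexx orbT.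
exists M; apply/nbhs_ballP; exists (d / p.+1%:R) => /= [|v]; first by rewrite divr_gt0.
rewrite -ball_normE /= => wv; rewrite -(subrKC w v).
apply: (cross_polytope_sub (C := C) d_gt0 Cw (@econvex_sublevel M) C_vertex).
apply: le_lt_trans (l1_norm_le_mx_norm _) _; rewrite distrC in wv.
apply: le_lt_trans (_ : p%:R * (d / p.+1%:R) < d).
  by rewrite ler_wpM2l // ltW.
by rewrite mulrA ltr_pdivrMr ?ltr0n // [p%:R * d]mulrC ltr_pM2l // ltr_nat.
Qed.

End econvex_bounded_above.

Theorem lemma5p1 (R : realType) (n s p : nat)
  (S : set 'cV[R]_n) (A : 'M[R]_(s, n)) (K : 'M[R]_(p, n))
  (g : 'cV[R]_s -> \bar R) (h : 'cV[R]_n -> R) (f : 'cV[R]_p -> \bar R)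
  (U : set 'cV[R]_n) (L : R)
  (* standing assumptions *)
  (HS0 : S !=set0) (HSconv : convex_set S) (HScomp : compact S)
  (Hgprop : eproper g) (Hgconv : econvex g) (Hglsc : lower_semicontinuous g)
  (HUopen : open U) (HSU : S `<=` U)
  (Hhdiff : forall x, U x -> differentiable h x)
  (HL : 0 <= L)
  (HhLip : forall x y, U x -> U y -> enorm (grad h x - grad h y) <= L * enorm (x - y))
  (Hfprop : eproper f) (Hfconv : econvex f) (Hflsc : lower_semicontinuous f)
  (HKS : forall x, S x -> interior (edom f) (K *m x))
  (HfKpos : forall x, S x -> (0 < f (K *m x))%E)
  (HSAg : exists x, S x /\ (g (A *m x) < +oo)%E)
  (Hinf : (0 < ereal_inf [set g (A *m x) + (h x)%:E | x in S])%E)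
  (* algorithm parameters *)
  (beta nu q eps : R)
  (Hbeta : 0 < beta < 2) (Hnu : 0 < nu) (Hq : 0 < q < 1) (Heps : 0 < eps)
  (* iterates *)
  (x u : nat -> 'cV[R]_n) (z : nat -> 'cV[R]_s) (y : nat -> 'cV[R]_p)
  (theta delta gamma : nat -> R) (j : nat -> nat)
  (Hdelta0 : 0 < delta 0) (Htheta0 : 0 < theta 0) (Hgamma0 : gamma 0 = 1)
  (Hy : forall k, is_subgrad f (K *m x k) (y k.+1))
  (Hx : forall k, is_proj S
          (u k + (theta k / delta k) *: (K^T *m y k.+1)
               - (delta k)^-1 *: grad h (x k) - (delta k)^-1 *: (A^T *m z k))
          (x k.+1))
  (Hu : forall k, u k.+1 = (1 - beta) *: u k + beta *: x k.+1)
  (Hz : forall k, is_prox (fconj g) (gamma k * q ^+ j k)^-1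
          ((gamma k * q ^+ j k)^-1 *: (A *m x k.+1)) (z k.+1))
  (Hjpos : forall k, (0 < Psi A g h S (x k.+1) (z k.+1) (u k.+1) (delta k)
                              (gamma k * q ^+ j k) / f (K *m x k.+1))%E)
  (Htheta : forall k, theta k.+1 = fine (Psi A g h S (x k.+1) (z k.+1) (u k.+1)
                              (delta k) (gamma k * q ^+ j k) / f (K *m x k.+1)))
  (Hjmin : forall k (j' : nat) (z' : 'cV[R]_s), (j' < j k)%N ->
          is_prox (fconj g) (gamma k * q ^+ j')^-1
            ((gamma k * q ^+ j')^-1 *: (A *m x k.+1)) z' ->
          ~ (0 < Psi A g h S (x k.+1) z' (u k.+1) (delta k)
                     (gamma k * q ^+ j') / f (K *m x k.+1))%E)
  (Hgamma : forall k, gamma k.+1 =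
          (if enorm (z k.+1) > Num.min (eps / (gamma k * q ^+ j k))
                                        (Num.sqrt (2 * eps / (gamma k * q ^+ j k)))
           then gamma k * q ^+ j k * q else gamma k * q ^+ j k))
  (Hdelta : forall k, delta k.+1 = 2 * nu + L + 2 * opnorm A ^+ 2 / gamma k.+1)
  (* starting point *)
  (Hx0 : S (x 0)) :
  exists m M : R, 0 < m /\ 0 < M /\
    forall k, (m%:E < f (K *m x k))%E /\ (f (K *m x k) <= M%:E)%E.
Proof.
have xS k : S (x k) by elim: k => // k _; case: (Hx k).
have [M M_gt0 fK_le] : exists2 M : R, 0 < M & forall v, S v -> (f (K *m v) <= M%:E)%E.
  apply: (compact_bounded_above (f := f \o mulmx K) HScomp) => v Sv.
  have [c fc] := econvex_bounded_above_near Hfprop Hfconv (HKS v Sv).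
  by exists c; exact: mulmx_continuous fc.
have [m m_gt0 fK_gt] : exists2 m : R, 0 < m & forall v, S v -> (m%:E < f (K *m v))%E.
  apply: (compact_lsc_bounded_below_pos (f := f \o mulmx K) HScomp _ HfKpos).
  exact: lower_semicontinuous_comp (@mulmx_continuous _ _ _ 1 K) Hflsc.
by exists m, M; do 2!split => //; move=> k; split; [exact: fK_gt | exact: fK_le].
Qed.
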